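(* Let $T\in(0,\infty)$ and let $\big(\Omega,\mathscr{F},(\mathscr{F}_t)_{t\in[0,T]},\mathbf{P}\big)$ be a complete filtered probability space with $\mathscr{F}_T=\mathscr{F}$, whose filtration satisfies the usual conditions. Let $S$ be an adapted $d$-dimensional process with continuous paths and values in $(0,\infty)^d$. If $S$ is sticky, then for every stopping time $\tau\in[0,T]$ and every $\mathscr{F}_\tau$-measurable random variable $\eta\ge 0$, $$\mathbf{P}[S^\star_\tau<\eta\mid\mathscr{F}_\tau]>0\quad\text{almost surely on }\{\eta>0\},$$ i.e. $\mathbf{P}\big[\{\mathbf{P}[S^\star_\tau<\eta\mid\mathscr{F}_\tau]>0\}\cap\{\eta>0\}\big]=\mathbf{P}[\eta>0]$.
   Context: For $x\in\mathbb{R}^d$ let $\|x\|=\max(|x_1|,\ldots,|x_d|)$. For a stopping time $\tau\in[0,T]$ write $S^\star_\tau=\sup_{u\in[\tau,T]}\|S_u-S_\tau\|$. The process $S$ is called sticky if for every deterministic $t\in[0,T)$ and every $\delta>0$, $\mathbf{P}[S^\star_t<\delta\mid\mathscr{F}_t]>0$ almost surely. *)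

From HB Require Import structures.
From mathcomp Require Import all_boot all_order all_algebra.
From mathcomp Require Import all_classical all_reals all_analysis.
Set Implicit Arguments. Unset Strict Implicit. Unset Printing Implicit Defensive.
Import Order.TTheory GRing.Theory Num.Theory.
Import numFieldNormedType.Exports.
Local Open Scope classical_set_scope.
Local Open Scope ring_scope.

Section Defs.
Context {dsp : measure_display} {Omega : measurableType dsp} {R : realType}.

Definition maxnorm (d : nat) (x : 'I_d -> R) : R := \big[Num.max/0]_(i < d) `|x i|.

Definition Gmeasurable (G : set (set Omega)) (f : Omega -> R) : Prop :=
  forall B : set R, measurable B -> G (f @^-1` B).

Definition is_filtration (T : R) (F : R -> set (set Omega)) : Prop :=
  [/\ (forall t, 0 <= t <= T -> sigma_algebra setT (F t) /\ F t `<=` measurable),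
      (forall s t, 0 <= s -> s <= t -> t <= T -> F s `<=` F t) &
      F T = measurable].

Definition complete_space (P : probability Omega R) : Prop :=
  forall N, measurable N -> P N = 0%E -> forall A, A `<=` N -> measurable A.

Definition usual_conditions (P : probability Omega R) (T : R)
    (F : R -> set (set Omega)) : Prop :=
  (forall N, measurable N -> P N = 0%E -> F 0 N) /\
  (forall t A, 0 <= t -> t < T -> (forall s, t < s -> s <= T -> F s A) -> F t A).

Definition stopping_time (T : R) (F : R -> set (set Omega)) (tau : Omega -> R) : Prop :=
  (forall w, 0 <= tau w <= T) /\
  (forall t, 0 <= t <= T -> F t [set w | tau w <= t]).

Definition F_at (T : R) (F : R -> set (set Omega)) (tau : Omega -> R) : set (set Omega) :=
  [set A | measurable A /\ forall t, 0 <= t <= T -> F t (A `&` [set w | tau w <= t])].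

Definition Sstar (d : nat) (T : R) (S : R -> Omega -> 'I_d -> R) (tau : Omega -> R)
    (w : Omega) : R :=
  sup [set maxnorm (fun i => S u w i - S (tau w) w i) | u in `[tau w, T]].

Definition cond_prob_version (P : probability Omega R) (G : set (set Omega))
    (A : set Omega) (Y : Omega -> R) : Prop :=
  [/\ measurable A, Gmeasurable G Y, P.-integrable setT (EFin \o Y) &
      forall B, G B -> (\int[P]_(x in B) (Y x)%:E = P (A `&` B))%E].

Definition sticky (P : probability Omega R) (d : nat) (T : R)
    (F : R -> set (set Omega)) (S : R -> Omega -> 'I_d -> R) : Prop :=
  forall t delta, 0 <= t -> t < T -> 0 < delta ->
  forall Y, cond_prob_version P (F t) [set w | Sstar T S (fun _ => t) w < delta] Y ->
  {ae P, forall w, 0 < Y w}.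

End Defs.

(* Let A := {eta > 0, Y <= 0}, an F_tau-event. As Y is a version of
   P[S*_tau < eta | F_tau] and Y <= 0 on A, the event A ∩ {S*_tau < eta} is null;
   we show that A itself is null. Fix c = 1/(j+1), a grid of mesh h = T/(m+1) and a
   grid point t, and consider the event that tau lies in (t - 2h, t], that 2c < eta,
   and that S oscillates by at most c/2 on [t - 2h, t]. This event belongs to F_t, and
   on it S*_tau <= c/2 + S*_t, so its intersection with {S*_t < c} is null. Since S is
   sticky, P[S*_t < c | F_t] > 0 almost surely at the deterministic time t, hence the
   event itself is null. By continuity of the paths, countably many such events
   cover A. *)

From HB Require Import structures.
From mathcomp Require Import all_boot all_order all_algebra.
From mathcomp Require Import all_classical all_reals all_analysis.
From mathcomp Require Import measurable_realfun lra.
Import Order.TTheory GRing.Theory Num.Theory.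
Import numFieldNormedType.Exports.
Local Open Scope classical_set_scope.
Local Open Scope ring_scope.

Section conditional_probability.
Context {d} {Omega : measurableType d} {R : realType} (P : probability Omega R)
  {G : set (set Omega)}.
Hypotheses (sigmaG : sigma_algebra setT G) (subG : G `<=` measurable).

Let OG := g_sigma_algebraType G.

Let measurableGE (B : set OG) : measurable B = G B.
Proof. by rewrite measurable_g_measurableTypeE. Qed.

Let idG : Omega -> OG := id.

Let measurable_idG : measurable_fun setT idG.
Proof. by move=> _ B; rewrite measurableGE setTI => /subG. Qed.

HB.instance Definition _ := isMeasurableFun.Build _ _ _ _ idG measurable_idG.

Let PG := distribution P idG.

Let integrable_idG (f : OG -> \bar R) :
  PG.-integrable setT f -> P.-integrable setT (f \o idG).
Proof.
move=> /integrableP[mf]; rewrite ge0_integral_pushforward //.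
  by move=> fint; apply/integrableP; split => //; exact: measurableT_comp.
by apply: measurableT_comp => //; exact: abse_measurable.
Qed.

Section restriction.
Variables (A : set Omega) (mA : measurable A).

(* P[A | G] is the Radon-Nikodym derivative of B |-> P(A `&` B) with respect to P,
   both measures being taken on the sigma-algebra G. *)
Definition trace_on_G := pushforward (mrestr P mA) idG.

(* The library's measure instance on a pushforward is parameterized by the
   measurability proof of the map, so it cannot be inferred and is named here. *)
HB.instance Definition _ := Measure.copy trace_on_G
  (measure_function_pushforward__canonical__measure_function_Measure
     (mrestr P mA) measurable_idG).

Let trace_on_G_fin : fin_num_fun trace_on_G.
Proof.
by move=> B mB; rewrite /trace_on_G /pushforward /mrestr fin_num_measure //;
  apply: measurableI => //; apply: subG; rewrite -measurableGE.
Qed.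

HB.instance Definition _ := Measure_isFinite.Build _ _ _ trace_on_G trace_on_G_fin.

Let trace_on_G_dominated : charge_of_finite_measure trace_on_G `<< PG.
Proof.
apply/null_content_dominatesP => B mB PB0.
apply/eqP; rewrite eq_le measure_ge0 // andbT -PB0.
have mB' : measurable (idG @^-1` B) by apply: subG; rewrite -measurableGE.
by apply: le_measure; rewrite ?inE //; exact: measurableI.
Qed.

Lemma cond_prob_version_exists : exists Y, cond_prob_version P G A Y.
Proof.
set f := Radon_Nikodym (charge_of_finite_measure trace_on_G) PG.
have f_fin x : f x \is a fin_num := Radon_Nikodym_fin_num x trace_on_G_dominated.
have fint : PG.-integrable setT f := Radon_Nikodym_integrable trace_on_G_dominated.
have mf : measurable_fun setT f := measurable_int _ fint.
have fE : EFin \o (fine \o f) = f by apply/funext => x /=; rewrite fineK.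
exists (fine \o f); split => //.
- move=> B mB; rewrite -measurableGE -[X in measurable X]setTI.
  exact: (measurableT_comp (fine_measurable measurableT) mf).
- by move: (integrable_idG _ fint); rewrite -fE.
- move=> B GB; have mB : measurable (B : set OG) by rewrite measurableGE.
  transitivity (\int[P]_(x in B) (f \o idG) x)%E.
    by apply: eq_integral => x _ /=; rewrite fineK.
  rewrite setIC -[RHS]/(trace_on_G B) (Radon_Nikodym_integral trace_on_G_dominated mB).
  rewrite /PG /distribution integral_pushforward //.
  by apply: (integrableS measurableT) => //; [exact: subG|exact: integrable_idG _ fint].
Qed.

End restriction.
End conditional_probability.

Section maxnorm.
Context {R : realType} {n : nat}.
Implicit Types (x y : 'I_n -> R).

Lemma maxnorm_ge0 x : 0 <= maxnorm x.
Proof. by rewrite /maxnorm; elim/big_ind: _ => // u v; rewrite le_max => ->. Qed.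

Lemma le_maxnorm x i : `|x i| <= maxnorm x.
Proof. exact: le_bigmax. Qed.

Lemma maxnorm_le x c : 0 <= c -> (forall i, `|x i| <= c) -> maxnorm x <= c.
Proof. by move=> c0 xc; apply: bigmax_le. Qed.

Lemma maxnormD x y : maxnorm (fun i => x i + y i) <= maxnorm x + maxnorm y.
Proof.
apply: maxnorm_le => [|i]; first by rewrite addr_ge0 ?maxnorm_ge0.
by apply: le_trans (ler_normD _ _) _; rewrite lerD ?le_maxnorm.
Qed.

End maxnorm.

Section continuity_on_segment.
Context {R : realType}.

Lemma within_continuous_ball [I : finType] [f : I -> R -> R] [a b x e : R] :
  (forall i, {within `[a, b], continuous f i}) -> a <= x <= b -> 0 < e ->
  exists2 k : R, 0 < k & forall u, a <= u <= b -> `|u - x| < k ->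
    forall i, `|f i u - f i x| < e.
Proof.
move=> cf xab e0; have abx : [set` `[a, b]] x by rewrite /= in_itv.
have near_x i : \forall u \near nbhs x, [set` `[a, b]] u -> `|f i x - f i u| < e.
  have /cvgrPdist_lt /(_ e e0) := (subspace_continuousP _ _).1 (cf i) x abx.
  by rewrite near_withinE.
have : \forall u \near nbhs x, forall i, [set` `[a, b]] u -> `|f i x - f i u| < e.
  exact: filter_forall.
move=> /nbhs_ballP[k k0 xk].
exists k => // u uab ux i; rewrite distrC; apply: xk; last by rewrite /= in_itv.
by rewrite /ball /= distrC.
Qed.

Lemma within_continuous_bounded [I : finType] [f : I -> R -> R] [a b : R] :
  (forall i, {within `[a, b], continuous f i}) ->
  exists2 M : R, 0 <= M & forall i x, a <= x <= b -> `|f i x| <= M.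
Proof.
move=> cf; have bnd i : \forall M \near +oo, forall x, a <= x <= b -> `|f i x| <= M.
  have := compact_bounded (continuous_compact (cf i) (@segment_compact R a b)).
  case=> M [Mr HM]; exists M; split => // N MN x xab.
  by apply: (HM N MN); exists x; rewrite /= ?in_itv.
have : \forall M \near +oo, forall i x, a <= x <= b -> `|f i x| <= M.
  by apply: filter_forall => j; exact: bnd.
case=> M [_ HM].
have [M0 MM] : 0 <= Num.max 0 M /\ M <= Num.max 0 M by rewrite !le_max !lexx orbT.
by exists (Num.max 0 M + 1) => [|i x xab]; [lra|apply: HM xab; lra].
Qed.

Lemma le_itv_of_rat [f : R -> R] [C a b c : R] : a < b -> {within `[a, b], continuous f} ->
  (forall q : rat, a <= ratr q <= b -> `|f (ratr q) - C| <= c) ->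
  forall x, a <= x <= b -> `|f x - C| <= c.
Proof.
move=> ab cf fq x xab; rewrite leNgt; apply/negP => cfx.
have e0 : 0 < `|f x - C| - c by rewrite subr_gt0.
have [k k0 xk] := @within_continuous_ball unit (fun=> f) _ _ _ _ (fun=> cf) xab e0.
have [|q] := @rat_in_itvoo _ (Num.max a (x - k)) (Num.min b (x + k)).
  case/andP: xab => ax xb; rewrite gt_max !lt_min.
  by apply/andP; split; apply/andP; split; lra.
rewrite in_itv /= gt_max lt_min => /andP[/andP[aq kq] /andP[qb qk]].
have qab : a <= ratr q <= b by rewrite !ltW.
have qx : `|ratr q - x| < k by rewrite ltr_norml; apply/andP; split; lra.
have := xk _ qab qx tt; have := fq q qab; have := ler_distD (f (ratr q)) (f x) C.
rewrite [`|f x - f _|]distrC; lra.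
Qed.

End continuity_on_segment.

Section measurable_on_segment.
Context {R : realType} d (M : measurableType d).

Lemma measurable_forall_rat (Q : pred rat) (A : rat -> set M) :
  (forall q, Q q -> measurable (A q)) -> measurable [set w | forall q, Q q -> A q w].
Proof.
move=> mA; have -> : [set w | forall q, Q q -> A q w] =
    ~` \bigcup_q (if Q q then ~` A q else set0).
  apply/seteqP; split => w /=.
    by move=> Aw [q _]; case: ifP => // /Aw.
  by move=> nA q Qq; apply: contra_notP nA => nAq; exists q => //; rewrite Qq.
by apply/measurableC/bigcupT_measurable_rat => q; case: ifP => // /mA /measurableC.
Qed.

Lemma measurable_dist_le [f g : M -> R] (c : R) :
  measurable_fun setT f -> measurable_fun setT g ->
  measurable [set w | `|f w - g w| <= c].
Proof.
move=> mf mg; rewrite -[X in measurable X]setTI; apply: measurable_fun_le => //.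
by apply: measurableT_comp => //; exact: measurable_funB.
Qed.

Variables (I : finType) (X : R -> M -> I -> R) (a b : R).
Hypotheses (ab : a < b)
  (mX : forall q : rat, a <= ratr q <= b -> forall i, measurable_fun setT (X (ratr q) ^~ i))
  (cX : forall w i, {within `[a, b], continuous (fun u => X u w i)}).

Lemma measurable_dist_le_itv (Z : M -> I -> R) (c : R) :
  (forall i, measurable_fun setT (Z ^~ i)) ->
  measurable [set w | forall u i, a <= u <= b -> `|X u w i - Z w i| <= c].
Proof.
move=> mZ; have -> : [set w | forall u i, a <= u <= b -> `|X u w i - Z w i| <= c] =
    [set w | forall q, a <= ratr q <= b ->
               (\bigcap_(i in [set: I]) [set w | `|X (ratr q) w i - Z w i| <= c]) w].
  apply/seteqP; split => w /= Xw; first by move=> q qab i _; apply: Xw.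
  by move=> u i; apply: (le_itv_of_rat ab (cX w i)) => q /Xw/(_ i); apply.
apply: measurable_forall_rat => q qab.
by apply: fin_bigcap_measurable => // i _; exact: measurable_dist_le _ (mX q qab i) (mZ i).
Qed.

Lemma measurable_osc_le (c : R) :
  measurable [set w | forall u v i, a <= u <= b -> a <= v <= b ->
                        `|X u w i - X v w i| <= c].
Proof.
have -> : [set w | forall u v i, a <= u <= b -> a <= v <= b -> `|X u w i - X v w i| <= c] =
    [set w | forall q, a <= ratr q <= b ->
               [set w | forall u i, a <= u <= b -> `|X u w i - X (ratr q) w i| <= c] w].
  apply/seteqP; split => w /= Xw; first by move=> q qab u i uab; exact: Xw.
  move=> u v i uab; rewrite distrC; apply: (le_itv_of_rat ab (cX w i)) => q qab.
  by rewrite distrC; exact: Xw.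
apply: measurable_forall_rat => q qab; exact: measurable_dist_le_itv (mX q qab).
Qed.

End measurable_on_segment.

Section conditional_probability_null.
Context {d} {Omega : measurableType d} {R : realType} {P : probability Omega R}
  {G : set (set Omega)} {A : set Omega} {Y : Omega -> R}.
Hypotheses (subG : G `<=` measurable) (YA : cond_prob_version P G A Y).

Lemma cond_prob_le0_null [B] : G B -> (forall w, B w -> Y w <= 0) -> P (A `&` B) = 0%E.
Proof.
case: YA => _ _ _ YAE GB YB; apply/eqP; rewrite eq_le measure_ge0 andbT -YAE //.
have -> : (\int[P]_(x in B) (Y x)%:E = - \int[P]_(x in B) (- Y x)%:E)%E.
  rewrite -integral_ge0N => [|w /YB]; last by rewrite lee_fin oppr_ge0.
  by apply: eq_integral => w _; rewrite EFinN oppeK.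
by rewrite oppe_le0; apply: integral_ge0 => w /YB; rewrite lee_fin oppr_ge0.
Qed.

Lemma cond_prob_gt0_null [B] : {ae P, forall w, 0 < Y w} -> G B ->
  P (A `&` B) = 0%E -> P B = 0%E.
Proof.
case: YA => _ _ intY YAE Ypos GB PAB; have mB := subG _ GB.
have mY : measurable_fun B (EFin \o Y) := measurable_funS measurableT (subsetT B)
  (measurable_int _ intY).
have : (\int[P]_(x in B) `|(EFin \o Y) x| = 0)%E.
  rewrite -PAB -(YAE _ GB); apply: ae_eq_integral => //.
    exact: measurableT_comp.
  by apply: filterS Ypos => w Yw _ /=; rewrite gtr0_norm.
move=> /(ae_eq_integral_abs P mB mY).1 YB0; apply/(negligibleP _ mB).
apply: negligibleS (negligibleU YB0 Ypos) => w Bw.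
have [Yw|Yw] := ltP 0 (Y w); last by right => /=; rewrite ltNge Yw.
by left => /= /(_ Bw) [] /eqP; rewrite gt_eqF.
Qed.

End conditional_probability_null.

Section sticky_process.
Context dsp (Omega : measurableType dsp) (R : realType) (P : probability Omega R)
  (T : R) (F : R -> set (set Omega)) (d : nat) (S : R -> Omega -> 'I_d -> R).
Hypotheses (T_gt0 : 0 < T) (filtF : is_filtration T F)
  (adaptedS : forall [t] i, 0 <= t <= T -> Gmeasurable (F t) (fun w => S t w i))
  (contS : forall w i, {within `[0, T], continuous (fun t => S t w i)}).

Lemma sigma_algebra_F [t] : 0 <= t <= T -> sigma_algebra setT (F t).
Proof. by case: filtF => FT _ _ /FT[]. Qed.

Lemma F_sub_measurable [t] : 0 <= t <= T -> F t `<=` measurable.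
Proof. by case: filtF => FT _ _ /FT[]. Qed.

Lemma measurable_FE t (A : set Omega) : 0 <= t <= T ->
  measurable (A : set (g_sigma_algebraType (F t))) = F t A.
Proof. by move=> /sigma_algebra_F FtT; rewrite measurable_g_measurableTypeE. Qed.

Lemma measurable_S_at t u i : 0 <= u <= t -> t <= T ->
  measurable_fun [set: g_sigma_algebraType (F t)] (fun w => S u w i).
Proof.
case/andP=> u0 ut tT _ B mB; have t0T : 0 <= t <= T by rewrite (le_trans u0 ut).
rewrite setTI measurable_FE //; case: filtF => _ Fmono _; apply: (Fmono u t) => //.
by apply: adaptedS => //; rewrite u0 (le_trans ut).
Qed.

Lemma measurable_S u i : 0 <= u <= T -> measurable_fun setT (fun w => S u w i).
Proof.
by move=> u0T _ B mB; rewrite setTI; exact: F_sub_measurable u0T _ (adaptedS i u0T B mB).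
Qed.

Lemma continuous_S_on a b w i : 0 <= a -> b <= T ->
  {within `[a, b], continuous (fun u => S u w i)}.
Proof.
move=> a0 bT; apply: continuous_subspaceW (contS w i) => u /=.
by rewrite !in_itv /= => /andP[au ub]; rewrite (le_trans a0 au) (le_trans ub bT).
Qed.

Lemma increment_bounded w : exists M, forall u v, 0 <= u <= T -> 0 <= v <= T ->
  maxnorm (fun i => S u w i - S v w i) <= M.
Proof.
have [M M0 SM] := within_continuous_bounded (contS w).
exists (M + M) => u v u0T v0T; apply: le_trans (maxnormD _ _) _.
by apply: lerD; apply: maxnorm_le => // i; rewrite ?normrN; exact: SM.
Qed.

Lemma le_Sstar (tau : Omega -> R) w u : 0 <= tau w -> tau w <= u <= T ->
  maxnorm (fun i => S u w i - S (tau w) w i) <= Sstar T S tau w.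
Proof.
move=> tau0 /andP[tu uT]; have [M devM] := increment_bounded w.
apply: ub_le_sup; last by exists u => //; rewrite /= in_itv /= tu uT.
exists M => x [v /=]; rewrite in_itv /= => /andP[tv vT] <-.
by apply: devM; rewrite ?tau0 ?(le_trans tau0 tv) ?vT ?(le_trans tu uT).
Qed.

Lemma Sstar_le (tau : Omega -> R) w c : tau w <= T ->
  (forall u, tau w <= u <= T -> maxnorm (fun i => S u w i - S (tau w) w i) <= c) ->
  Sstar T S tau w <= c.
Proof.
move=> tauT devc; apply: ge_sup => [|x [u /=]]; last by rewrite in_itv => /devc cu <-.
exists (maxnorm (fun i => S (tau w) w i - S (tau w) w i)), (tau w) => //.
by rewrite /= in_itv /= lexx.
Qed.

Lemma Sstar_le_add (tau : Omega -> R) t w c : 0 <= tau w <= t -> t <= T ->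
  (forall u, tau w <= u <= t -> maxnorm (fun i => S u w i - S (tau w) w i) <= c) ->
  Sstar T S tau w <= c + Sstar T S (fun=> t) w.
Proof.
case/andP=> tau0 taut tT devc; have t0 := le_trans tau0 taut.
have Sstar_t0 : 0 <= Sstar T S (fun=> t) w.
  by apply: le_trans (maxnorm_ge0 _) (le_Sstar (fun=> t) w t t0 _); rewrite lexx.
apply: Sstar_le => [|u /andP[tauu uT]]; first exact: le_trans tT.
have [ut|tu] := leP u t; first by rewrite ler_wpDr // devc // tauu.
have -> : (fun i => S u w i - S (tau w) w i) =
    (fun i => (S u w i - S t w i) + (S t w i - S (tau w) w i)).
  by apply/funext => i; rewrite addrA subrK.
rewrite addrC; apply: le_trans (maxnormD _ _) _; apply: lerD.
  by apply: (le_Sstar (fun=> t)); rewrite ?t0 // (ltW tu).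
by apply: devc; rewrite taut lexx.
Qed.

Lemma measurable_Sstar_lt t delta : 0 <= t < T -> 0 < delta ->
  measurable [set w | Sstar T S (fun=> t) w < delta].
Proof.
case/andP=> t0 tT delta0; pose c n := delta - n.+1%:R^-1.
have -> : [set w | Sstar T S (fun=> t) w < delta] =
    \bigcup_n [set w | forall u i, t <= u <= T -> `|S u w i - S t w i| <= c n].
  apply/seteqP; split => w /=.
    set s := Sstar _ _ _ w => Sstar_lt; have ds : 0 < delta - s by rewrite subr_gt0.
    pose n := Num.truncn (delta - s)^-1; exists n => // u i tu.
    have : n.+1%:R^-1 < delta - s by rewrite invf_plt ?posrE ?ltr0n // truncnS_gt.
    have := le_trans (le_maxnorm _ i) (le_Sstar (fun=> t) w u t0 tu).
    by rewrite /c -/s; move: (n.+1%:R^-1) => x; clearbody s; lra.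
  move=> [n _ devc]; apply: (@le_lt_trans _ _ (Num.max 0 (c n))); last first.
    by rewrite gt_max delta0 /c ltrBlDr ltrDl invr_gt0 ltr0n.
  apply: Sstar_le => [|u tu]; first exact: ltW.
  apply: maxnorm_le => [|i]; first by rewrite le_max lexx.
  by apply: le_trans (devc u i tu) _; rewrite le_max lexx orbT.
apply: bigcupT_measurable => n; apply: measurable_dist_le_itv => //.
- by move=> q /andP[tq qT] i; apply: measurable_S; rewrite qT (le_trans t0).
- by move=> w i; exact: continuous_S_on.
- by move=> i; apply: measurable_S; rewrite t0 ltW.
Qed.

Lemma le_stopping_F (tau : Omega -> R) s t :
  stopping_time T F tau -> 0 <= t <= T -> s <= t ->
  F t [set w | tau w <= s].
Proof.
case=> tau0T tauF t0T st; have [s0|s0] := leP 0 s.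
  case: filtF => _ Fmono _; apply: (Fmono s t) => //; first by case/andP: t0T.
  by apply: tauF; rewrite s0 (le_trans st); case/andP: t0T.
have -> : [set w | tau w <= s] = set0.
  apply/seteqP; split => // w /= /le_lt_trans /(_ s0).
  by case/andP: (tau0T w) => /le_gtF ->.
by rewrite -measurable_FE.
Qed.

Definition small_osc a b c := [set w | forall u v i, a <= u <= b -> a <= v <= b ->
  `|S u w i - S v w i| <= c].

Lemma F_small_osc a t c : 0 <= a < t -> t <= T -> F t (small_osc a t c).
Proof.
case/andP=> a0 at_ tT; rewrite -measurable_FE ?tT ?(le_trans a0 (ltW at_)) //.
apply: measurable_osc_le => // [q /andP[aq qt] i|w i].
  by apply: measurable_S_at; rewrite ?qt ?(le_trans a0 aq).
exact: continuous_S_on.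
Qed.

Definition grid_step m := T / m.+1%:R.
(* [minn] clamps the indices past the last grid point, so that [grid_pt m k <= T]. *)
Definition grid_pt m k := (minn k m).+1%:R * grid_step m.
Definition grid_lo m k := grid_pt m k - 2 * grid_step m.

Lemma grid_step_gt0 m : 0 < grid_step m.
Proof. by rewrite divr_gt0 ?ltr0n. Qed.

Lemma grid_pt_gt0 m k : 0 < grid_pt m k.
Proof. by rewrite mulr_gt0 ?ltr0n ?grid_step_gt0. Qed.

Lemma grid_pt_le m k : grid_pt m k <= T.
Proof.
rewrite /grid_pt /grid_step mulrA ler_pdivrMr ?ltr0n // [T * _]mulrC ler_pM2r //.
by rewrite ler_nat ltnS geq_minr.
Qed.

Lemma grid_lo_lt m k : grid_lo m k < grid_pt m k.
Proof. by rewrite /grid_lo ltrBlDr ltrDl mulr_gt0 ?grid_step_gt0. Qed.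

Lemma grid_cell m [x] : 0 <= x <= T -> exists k, grid_lo m k < x <= grid_pt m k.
Proof.
case/andP=> x0 xT; set h := grid_step m; have h0 : 0 < h := grid_step_gt0 m.
have /andP[] := truncn_itv (divr_ge0 x0 (ltW h0)); set r := Num.truncn _.
rewrite ler_pdivlMr // ltr_pdivrMr // => rx xr; exists r.
rewrite /grid_lo /grid_pt -/h; have [rm|mr] := leqP r m.
  by move: xr; rewrite -natr1 => xr; apply/andP; split; lra.
have Th : m.+1%:R * h = T by rewrite /h /grid_step mulrC divfK ?pnatr_eq0.
have : m.+1%:R * h <= r%:R * h by rewrite ler_pM2r // ler_nat.
by rewrite Th => Tr; apply/andP; split; lra.
Qed.

Lemma small_osc_grid w [x e : R] : 0 <= x <= T -> 0 < e ->
  exists m k, (grid_lo m k < x <= grid_pt m k) /\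
    small_osc (Num.max 0 (grid_lo m k)) (grid_pt m k) e w.
Proof.
move=> x0T e0; have e20 : 0 < e / 2 by rewrite divr_gt0.
have [kap kap0 Sx] := within_continuous_ball (contS w) x0T e20.
pose m := Num.truncn (2 * T / kap); have [k /andP[lox xk]] := grid_cell m x0T.
have hm : 2 * grid_step m < kap.
  rewrite /grid_step mulrA ltr_pdivrMr ?ltr0n // [kap * _]mulrC -ltr_pdivrMr //.
  exact: truncnS_gt.
have lohi : grid_pt m k - grid_lo m k = 2 * grid_step m.
  by rewrite /grid_lo opprB addrC subrK.
have Sx_cell u : Num.max 0 (grid_lo m k) <= u <= grid_pt m k ->
    forall i, `|S u w i - S x w i| < e / 2.
  rewrite ge_max => /andP[/andP[u0 lou] upt]; apply: Sx.
    by rewrite u0 (le_trans upt (grid_pt_le _ _)).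
  by rewrite ltr_norml; apply/andP; split; lra.
exists m, k; split => [|u v i /Sx_cell Su /Sx_cell Sv]; first by rewrite lox xk.
have := ler_distD (S x w i) (S u w i) (S v w i); rewrite (distrC (S x w i)).
by move: (Su i) (Sv i); lra.
Qed.

Lemma F_atI (tau : Omega -> R) A B : F_at T F tau A -> F_at T F tau B ->
  F_at T F tau (A `&` B).
Proof.
move=> [mA FA] [mB FB]; split=> [|t t0T]; first exact: measurableI.
have -> : A `&` B `&` [set w | tau w <= t] =
    (A `&` [set w | tau w <= t]) `&` (B `&` [set w | tau w <= t]) by rewrite setIACA setIid.
rewrite -measurable_FE //.
by apply: measurableI; rewrite measurable_FE //; [exact: FA|exact: FB].
Qed.

Hypothesis stickyS : sticky P T F S.

Section cells.
Variables (tau eta : Omega -> R) (A : set Omega).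
Hypotheses (tauS : stopping_time T F tau) (FA : F_at T F tau A)
  (etaF : Gmeasurable (F_at T F tau) eta).

Let tau0 w : 0 <= tau w. Proof. by case: tauS => /(_ w) /andP[]. Qed.

Definition cell s t c := [set w | A w /\ 2 * c < eta w /\ (s < tau w <= t) /\
  small_osc (Num.max 0 s) t (c / 2) w].

Lemma Sstar_cell [s t c w] : t <= T -> 0 < c -> cell s t c w ->
  Sstar T S tau w <= c / 2 + Sstar T S (fun=> t) w.
Proof.
move=> tT c0 [_ [_ [/andP[stau taut] osc]]]; apply: Sstar_le_add; rewrite ?tau0 //.
move=> u /andP[tauu ut]; apply: maxnorm_le => [|i]; first by rewrite divr_ge0 ?ltW.
have stau' : Num.max 0 s <= tau w by rewrite ge_max tau0 ltW.
by apply: osc; rewrite ?lexx ?taut ?ut ?(le_trans stau' tauu) ?stau'.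
Qed.

Lemma F_cell s t c : s < t -> 0 < t < T -> F t (cell s t c).
Proof.
move=> st /andP[t0 tT]; have t0T : 0 <= t <= T by rewrite !ltW.
have -> : cell s t c = (A `&` [set w | tau w <= t]) `&`
    ((eta @^-1` `]2 * c, +oo[ `&` [set w | tau w <= t]) `&`
     (~` [set w | tau w <= s] `&` small_osc (Num.max 0 s) t (c / 2))).
  apply/seteqP; split => w /=; rewrite in_itv /= andbT.
    move=> [Aw [ceta [/andP[stau taut] osc]]].
    by do !split => //; apply/negP; rewrite -ltNge.
  move=> [[Aw taut] [[ceta _] [stau osc]]].
  by do !split => //; rewrite taut andbT ltNge; apply/negP.
rewrite -measurable_FE //.
apply: measurableI; last apply: measurableI; last apply: measurableI.
- by rewrite measurable_FE //; case: FA => _; apply.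
- by rewrite measurable_FE //; case: (etaF _ (measurable_itv `]2 * c, +oo[)) => _; apply.
- by apply: measurableC; rewrite measurable_FE //; exact: le_stopping_F (ltW st).
- rewrite measurable_FE //; apply: F_small_osc; rewrite ?(ltW tT) //.
  by rewrite le_max lexx gt_max t0 st.
Qed.

Lemma cell_cover [w] : A w -> 0 < eta w ->
  exists j m k, cell (grid_lo m k) (grid_pt m k) j.+1%:R^-1 w.
Proof.
move=> Aw eta0; pose j := Num.truncn (2 / eta w).
have etaj : 2 * j.+1%:R^-1 < eta w.
  by rewrite ltr_pdivrMr ?ltr0n // mulrC -ltr_pdivrMr //; exact: truncnS_gt.
have tau0T : 0 <= tau w <= T by case: tauS.
have cj0 : 0 < j.+1%:R^-1 / 2 :> R by rewrite divr_gt0 ?invr_gt0 ?ltr0n.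
have [m [k [cellw osc]]] := small_osc_grid w tau0T cj0.
by exists j, m, k.
Qed.

Lemma cell_negligible s t c :
  P.-negligible (A `&` [set w | Sstar T S tau w < eta w]) ->
  s < t -> 0 < t <= T -> 0 < c -> P.-negligible (cell s t c).
Proof.
move=> AE st /andP[t0 tT] c0.
have cellE w : cell s t c w -> Sstar T S (fun=> t) w < c ->
    (A `&` [set w | Sstar T S tau w < eta w]) w.
  move=> cw Sstar_t; have := Sstar_cell tT c0 cw.
  by case: cw => Aw [ceta _]; split => //=; lra.
have [tTe|tT'] := eqVneq t T.
  apply: negligibleS AE => w cw; apply: cellE => //; apply: le_lt_trans c0.
  apply: Sstar_le => // u; rewrite tTe -eq_le => /eqP <-.
  by apply: maxnorm_le => // i; rewrite subrr normr0.
have tT_lt : t < T by rewrite lt_neqAle tT' tT.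
have t0T : 0 <= t <= T by rewrite (ltW t0) tT.
have Fcell : F t (cell s t c) by apply: F_cell; rewrite ?t0.
have mEt : measurable [set w | Sstar T S (fun=> t) w < c].
  by apply: measurable_Sstar_lt; rewrite ?(ltW t0).
have [Y YEt] :=
  cond_prob_version_exists P (sigma_algebra_F t0T) (F_sub_measurable t0T) _ mEt.
have mcell := F_sub_measurable t0T _ Fcell.
apply/(negligibleP _ mcell); apply: (cond_prob_gt0_null (F_sub_measurable t0T) YEt _ Fcell).
  exact: stickyS (ltW t0) tT_lt c0 _ YEt.
case: AE => N [mN PN AEN]; apply: subset_measure0 PN => //; first exact: measurableI.
by move=> w [Etw cw]; apply: AEN; exact: cellE.
Qed.

End cells.

Lemma cond_prob_Sstar_gt0 (tau eta Y : Omega -> R) :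
  stopping_time T F tau -> Gmeasurable (F_at T F tau) eta ->
  cond_prob_version P (F_at T F tau) [set w | Sstar T S tau w < eta w] Y ->
  {ae P, forall w, 0 < eta w -> 0 < Y w}.
Proof.
move=> tauS etaF YE; set E := [set w | _ < _] in YE.
set A := [set w | 0 < eta w /\ Y w <= 0].
have FA : F_at T F tau A.
  have -> : A = eta @^-1` `]0, +oo[ `&` Y @^-1` `]-oo, 0].
    by apply/seteqP; split => w /=; rewrite !in_itv /= andbT.
  by apply: F_atI; [apply: etaF|case: YE => _ YF _ _; apply: YF]; exact: measurable_itv.
have AE : P.-negligible (A `&` E).
  have mAE : measurable (A `&` E) by apply: measurableI; [case: FA|case: YE].
  apply/(negligibleP _ mAE); rewrite setIC.
  by apply: (cond_prob_le0_null YE FA) => w [].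
have cellN j m k : P.-negligible (cell tau eta A (grid_lo m k) (grid_pt m k) j.+1%:R^-1).
  by apply: cell_negligible; rewrite ?grid_lo_lt ?grid_pt_gt0 ?grid_pt_le ?invr_gt0 ?ltr0n.
have : P.-negligible A.
  apply: negligibleS (negligible_bigcup (fun j => negligible_bigcup (fun m =>
    negligible_bigcup (cellN j m)))) => w Aw.
  have [j [m [k cw]]] := cell_cover tau eta A tauS Aw Aw.1.
  by exists j => //; exists m => //; exists k.
apply: negligibleS => w /= /not_implyP[eta0 Yle]; split => //.
by rewrite leNgt; apply/negP.
Qed.

End sticky_process.

Theorem lemma1 (dsp : measure_display) (Omega : measurableType dsp) (R : realType)
  (P : probability Omega R) (T : R) (F : R -> set (set Omega))
  (d : nat) (S : R -> Omega -> 'I_d -> R) :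
  0 < T ->
  complete_space P ->
  is_filtration T F ->
  usual_conditions P T F ->
  (forall t i, 0 <= t <= T -> Gmeasurable (F t) (fun w => S t w i)) ->
  (forall w i, {within `[0, T], continuous (fun t => S t w i)}) ->
  (forall t w i, 0 <= t <= T -> 0 < S t w i) ->
  sticky P T F S ->
  forall (tau : Omega -> R) (eta : Omega -> R),
    stopping_time T F tau ->
    Gmeasurable (F_at T F tau) eta ->
    (forall w, 0 <= eta w) ->
    forall Y, cond_prob_version P (F_at T F tau) [set w | Sstar T S tau w < eta w] Y ->
    {ae P, forall w, 0 < eta w -> 0 < Y w}.
Proof.
move=> T_gt0 _ filtF _ adaptedS contS _ stickyS tau eta tauS etaF _ Y.
exact: cond_prob_Sstar_gt0.
Qed.
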